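(* Let $q$ be a prime power and let $m>a\geq 0$, $n>b\geq 0$, $h\geq 0$ be integers with $h\leq (m-a)(n-b)-\max\{m-a,n-b\}$. Let $\mathcal{C}_{\mathsf{out}}\in\mathbb{C}^{\mathsf{MR}}_{m\times n}(a,b,0)$ be an $[mn,(m-a)(n-b)]$ code over $\mathbb{F}_q$ with generator matrix $\mathbf{G}_{\mathsf{out}}\in\mathbb{F}_q^{(m-a)(n-b)\times mn}$. Let $s\geq (m-a)(n-b)$, let $\mathbf{g}\in\mathbb{F}_{q^s}^{(m-a)(n-b)}$ have entries that are linearly independent over $\mathbb{F}_q$, and let $\mathbf{G}_{\mathsf{in}}$ be the generator matrix (as in the definition below) of the Gabidulin code $\mathcal{C}_{\mathsf{in}}=\mathsf{Gab}\big((m-a)(n-b),(m-a)(n-b)-h,\mathbf{g}\big)$ over $\mathbb{F}_{q^s}$. Then the code over $\mathbb{F}_{q^s}$ spanned by the rows of $\mathbf{G}_{\mathsf{in}}\cdot\mathbf{G}_{\mathsf{out}}$ corrects every erasure pattern in $$\{\mathcal{E}'\cup\mathcal{I}\ \mid\ \mathcal{E}'\in\mathbb{E}^{\max}_{m\times n}(a,b,0),\ \mathcal{I}\subset([m]\times[n])\setminus\mathcal{E}',\ |\mathcal{I}|=h\}.$$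
   Context: Positions of vectors in $\mathbb{F}^{mn}$ are identified with the grid $[m]\times[n]$, where $[k]=\{1,\dots,k\}$. For linear codes $\mathcal{C}_1\subseteq\mathbb{F}^m$, $\mathcal{C}_2\subseteq\mathbb{F}^n$ with generator matrices $\mathbf{G}_1,\mathbf{G}_2$, $\mathcal{C}_1\otimes\mathcal{C}_2$ is the row span of the Kronecker product $\mathbf{G}_1\otimes\mathbf{G}_2$ (the $m\times n$ arrays with all columns in $\mathcal{C}_1$ and all rows in $\mathcal{C}_2$). A code for the topology $T_{m\times n}(a,b,h)$ is a linear code over a finite field $\mathbb{F}$ with a parity-check matrix $\begin{pmatrix}\mathbf{H}_{\mathsf{local}}\\ \mathbf{H}_{\mathsf{global}}\end{pmatrix}$, where $\mathbf{H}_{\mathsf{local}}$ is a parity-check matrix of $\mathcal{C}_{\mathsf{col}}\otimes\mathcal{C}_{\mathsf{row}}$ for some linear $[m,\geq m-a]$ code $\mathcal{C}_{\mathsf{col}}$ and $[n,\geq n-b]$ code $\mathcal{C}_{\mathsf{row}}$ over $\mathbb{F}$, and $\mathbf{H}_{\mathsf{global}}$ is an arbitrary $h\times mn$ matrix over $\mathbb{F}$; $\mathbb{C}_{m\times n}(a,b,h)$ denotes the set of all such codes. A code corrects an erasure pattern $\mathcal{E}\subseteq[m]\times[n]$ if no two distinct codewords agree on all positions outside $\mathcal{E}$. $\mathcal{E}$ is correctable in $T_{m\times n}(a,b,h)$ if some code in $\mathbb{C}_{m\times n}(a,b,h)$ corrects it; $\mathbb{E}_{m\times n}(a,b,h)$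 is the set of such patterns and $\mathbb{E}^{\max}_{m\times n}(a,b,h)$ the set of those not properly contained in another correctable pattern. A code in $\mathbb{C}_{m\times n}(a,b,h)$ is maximally recoverable (MR) if it corrects every pattern in $\mathbb{E}_{m\times n}(a,b,h)$; $\mathbb{C}^{\mathsf{MR}}_{m\times n}(a,b,h)$ is the set of MR codes. Gabidulin code: for $\mathbf{g}=(g_1,\dots,g_N)\in\mathbb{F}_{q^s}^N$ with $g_i$ linearly independent over $\mathbb{F}_q$, $\mathsf{Gab}(N,k,\mathbf{g})$ is the $[N,k]$ code over $\mathbb{F}_{q^s}$ spanned by the rows of the $k\times N$ matrix whose $(i,j)$ entry is $g_j^{q^{i-1}}$. *)

From HB Require Import structures.
From mathcomp Require Import all_boot all_order all_algebra all_field.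
From mathcomp Require Import mxtens.
Set Implicit Arguments. Unset Strict Implicit. Unset Printing Implicit Defensive.
Import GRing.Theory.
Local Open Scope ring_scope.

(* Positions of F^(mn) are identified with [m] x [n] via (i,j) |-> i*n + j,
   the same convention as the Kronecker product tensmx (mxtens). *)
Definition pos (m n : nat) (i : 'I_m) (j : 'I_n) : 'I_(m * n) :=
  mxtens_index (i, j).

Definition codeword (K : fieldType) (k N : nat) (G : 'M[K]_(k, N)) (x : 'rV[K]_N) :=
  (x <= G)%MS.

Definition corrects (K : fieldType) (m n k : nat) (G : 'M[K]_(k, m * n))
    (E : {set 'I_m * 'I_n}) : Prop :=
  forall x y : 'rV[K]_(m * n), codeword G x -> codeword G y ->
    (forall i j, (i, j) \notin E -> x 0 (pos i j) = y 0 (pos i j)) -> x = y.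

(* The code (row space of G) belongs to C_{m x n}(a,b,h): its parity-check
   matrix is (H_local ; H_global) with H_local a parity-check matrix of
   C_col (x) C_row, C_col an [m, >= m-a] code (generator Gc), C_row an
   [n, >= n-b] code (generator Gr), H_global an arbitrary h x mn matrix. *)
Definition in_topology (K : fieldType) (m n a b h k : nat) (G : 'M[K]_(k, m * n)) : Prop :=
  exists (kc kr : nat) (Gc : 'M[K]_(kc, m)) (Gr : 'M[K]_(kr, n))
         (Hg : 'M[K]_(h, m * n)),
    (m - a <= \rank Gc)%N /\ (n - b <= \rank Gr)%N /\
    forall x : 'rV[K]_(m * n),
      codeword G x <-> (codeword (tensmx Gc Gr) x /\ x *m Hg^T = 0).

Definition correctable (m n a b h : nat) (E : {set 'I_m * 'I_n}) : Prop :=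
  exists (K : finFieldType) (k : nat) (G : 'M[K]_(k, m * n)),
    in_topology a b h G /\ corrects G E.

Definition max_correctable (m n a b h : nat) (E : {set 'I_m * 'I_n}) : Prop :=
  correctable a b h E /\
  forall E' : {set 'I_m * 'I_n}, E \proper E' -> ~ correctable a b h E'.

Definition MR_code (K : fieldType) (m n a b h k : nat) (G : 'M[K]_(k, m * n)) : Prop :=
  in_topology a b h G /\
  forall E : {set 'I_m * 'I_n}, correctable a b h E -> corrects G E.

(* Generator matrix of Gab(N, k, g) over L, an extension of the field F with
   q = #|F| elements: entry (i,j) is g_j^(q^i) (i counted from 0). *)
Definition gab_gen (F : finFieldType) (L : fieldExtType F) (N k : nat)
    (g : 'rV[L]_N) : 'M[L]_(k, N) :=
  \matrix_(i < k, j < N) (g 0 j) ^+ (#|F| ^ i).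

From HB Require Import structures.
From mathcomp Require Import all_boot all_order all_algebra all_field.
From mathcomp Require Import mxtens.
Set Implicit Arguments. Unset Strict Implicit. Unset Printing Implicit Defensive.
Import GRing.Theory.
Local Open Scope ring_scope.

(* Let [k = (m-a)(n-b)] and [q = #|F|].  Two codewords agreeing outside
   [E' :|: I] differ by [c *m G_out] with [c = u *m G_in], and [c] is then
   orthogonal to the columns of [G_out] outside [E' :|: I].  As [E'] is
   correctable by the MR code [G_out], its columns outside [E'] have full rank
   [k], so those outside [E' :|: I] still have rank at least [k - h] over [F].
   On the other hand [c] is orthogonal to an [F]-column [w] exactly when the
   linearized polynomial [P = \sum_i u_i X^(q^i)] vanishes at
   [\sum_j w_j g_j]; as the [g_j] are [F]-independent, a nonzero [u] would give
   [P], of degree at most [q^(k-h-1)], at least [q^(k-h)] roots. *)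

Definition mask_cols (R : nmodType) (k N : nat) (S : {set 'I_N})
    (G : 'M[R]_(k, N)) : 'M[R]_(k, N) :=
  \matrix_(i, j) if j \in S then G i j else 0.

Section MaskCols.

Variables (k N : nat) (S : {set 'I_N}).

Lemma mulmx_mask_cols (R : pzRingType) l (A : 'M[R]_(l, k)) (G : 'M[R]_(k, N)) :
  A *m mask_cols S G = mask_cols S (A *m G).
Proof.
apply/matrixP => i j; rewrite !mxE; case: ifP => jS.
  by apply: eq_bigr => r _; rewrite mxE jS.
by rewrite big1 // => r _; rewrite mxE jS mulr0.
Qed.

Lemma map_mask_cols (R R' : nmodType) (f : {additive R -> R'}) (G : 'M[R]_(k, N)) :
  map_mx f (mask_cols S G) = mask_cols S (map_mx f G).
Proof. by apply/matrixP => i j; rewrite !mxE; case: ifP; rewrite ?raddf0. Qed.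

Lemma mask_cols_setU (R : nmodType) (T : {set 'I_N}) (G : 'M[R]_(k, N)) :
  mask_cols (S :|: T) G = mask_cols S G + mask_cols (T :\: S) G.
Proof.
apply/matrixP => i j; rewrite !mxE !inE.
by case: (j \in S); case: (j \in T); rewrite ?addr0 ?add0r.
Qed.

Variable K : fieldType.

Lemma mask_cols_diag (G : 'M[K]_(k, N)) :
  mask_cols S G = G *m diag_mx (\row_j (j \in S)%:R).
Proof.
rewrite mul_mx_diag; apply/matrixP => i j; rewrite !mxE.
by case: (j \in S); rewrite ?mulr1 ?mulr0.
Qed.

Lemma mxrank_mask_cols (G : 'M[K]_(k, N)) : (\rank (mask_cols S G) <= #|S|)%N.
Proof.
rewrite mask_cols_diag diag_mx_sum_delta; apply: leq_trans (mxrankM_maxr _ _) _.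
rewrite (eq_bigr (fun j => if j \in S then delta_mx j j else 0)) -?big_mkcond /=.
  rewrite -sum1_card; elim/big_ind2: _ => [|a A b B leA leB|j _].
  - by rewrite mxrank0.
  - by apply: leq_trans (mxrank_add A B) _; rewrite leq_add.
  - by rewrite mxrank_delta.
by move=> j _; rewrite mxE; case: (j \in S); rewrite ?scale1r ?scale0r.
Qed.

End MaskCols.

Lemma mxrank_mask_cols_setU (K : fieldType) k N (S T : {set 'I_N}) (G : 'M[K]_(k, N)) :
  (\rank (mask_cols (S :|: T) G) <= \rank (mask_cols S G) + #|T|)%N.
Proof.
rewrite mask_cols_setU; apply: leq_trans (mxrank_add _ _) _.
by rewrite leq_add2l (leq_trans (mxrank_mask_cols _ _)) // subset_leq_card // subsetDl.
Qed.

Definition grid_pos m n (E : {set 'I_m * 'I_n}) : {set 'I_(m * n)} :=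
  [set p | mxtens_unindex p \in E].

Lemma card_grid_pos m n (E : {set 'I_m * 'I_n}) : #|grid_pos E| = #|E|.
Proof.
have -> : grid_pos E = @mxtens_index m n @: E.
  by rewrite (can2_imset_pre _ (@mxtens_indexK m n) (@mxtens_unindexK m n)).
exact: card_imset (can_inj (@mxtens_indexK m n)).
Qed.

Section GridErasures.

Variables (K : fieldType) (m n k : nat) (G : 'M[K]_(k, m * n)).

Lemma corrects_row_free_mask_cols (E : {set 'I_m * 'I_n}) :
  row_free G -> corrects G E -> row_free (mask_cols (~: grid_pos E) G).
Proof.
move=> freeG corrG; apply: inj_row_free => v vG0.
apply: (row_free_inj freeG); rewrite mul0mx.
apply: corrG => [||i j ijE]; [exact: submxMl | exact: sub0mx |].
move/rowP/(_ (pos i j)): vG0; rewrite mulmx_mask_cols !mxE.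
by rewrite !inE mxtens_indexK ijE.
Qed.

Lemma mxrank_mask_cols_erasures (E I : {set 'I_m * 'I_n}) :
  row_free G -> corrects G E -> I \subset ~: E ->
  (k - #|I| <= \rank (mask_cols (~: grid_pos (E :|: I)) G))%N.
Proof.
move=> freeG corrG sIE.
have splitE : ~: grid_pos E = ~: grid_pos (E :|: I) :|: grid_pos I.
  apply/setP => p; rewrite !inE negb_or.
  case: (boolP (mxtens_unindex p \in I)) => [pI|]; last by rewrite andbT orbF.
  by have := subsetP sIE _ pI; rewrite inE => /negbTE ->.
rewrite leq_subLR -{1}(eqP (corrects_row_free_mask_cols freeG corrG)) splitE addnC.
by rewrite -(card_grid_pos I) mxrank_mask_cols_setU.
Qed.

End GridErasures.

Lemma max_rowspace_roots (F : finFieldType) (R : idomainType) r N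
    (A : 'M[F]_(r, N)) (f : 'rV[F]_N -> R) (P : {poly R}) :
  injective f -> P != 0 -> (forall v, (v <= A)%MS -> root P (f v)) ->
  (#|F| ^ \rank A < size P)%N.
Proof.
move=> inj_f P_neq0 rootP.
pose rs := [seq f (w *m row_base A) | w <- enum 'rV[F]_(\rank A)].
have <- : size rs = (#|F| ^ \rank A)%N by rewrite size_map -cardE card_mx mul1n.
apply: max_poly_roots P_neq0 _ _.
  by apply/allP => _ /mapP[w _ ->]; apply: rootP; rewrite -(eq_row_base A) submxMl.
by rewrite map_inj_uniq ?enum_uniq // => w1 w2 /inj_f/(row_free_inj (row_base_free A)).
Qed.

Section Gabidulin.

Variables (F : finFieldType) (L : fieldExtType F).
Local Notation q := #|F|.

Lemma pchar_nat_card_pow i : [pchar L].-nat (q ^ i)%N.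
Proof.
have [p p_pr pF] := finPcharP F.
have pL : p \in [pchar L] by rewrite pchar_lalg.
by rewrite (eq_pnat _ (pcharf_eq pL)) (card_pprimeChar pF) -expnM pnatX pnat_id ?orbT.
Qed.

Lemma expr_card_powZ (c : F) (x : L) i : (c *: x) ^+ (q ^ i)%N = c *: x ^+ (q ^ i)%N.
Proof.
have cq : c ^+ (q ^ i)%N = c.
  by elim: i => [|i IHi]; rewrite ?expr1 // expnS exprM expf_card IHi.
by rewrite exprZn cq.
Qed.

Lemma expr_card_pow_sum N (c : 'I_N -> F) (x : 'I_N -> L) i :
  (\sum_j c j *: x j) ^+ (q ^ i)%N = \sum_j c j *: x j ^+ (q ^ i)%N.
Proof.
have zero_pow : (0 : L) ^+ (q ^ i)%N = 0.
  by rewrite expr0n gtn_eqF // expn_gt0 (ltnW (finNzRing_gt1 F)).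
rewrite (big_morph _ (fun y z => exprDn_pchar y z (pchar_nat_card_pow i)) zero_pow).
by apply: eq_bigr => j _; apply: expr_card_powZ.
Qed.

Definition linearized_poly k (u : 'rV[L]_k) : {poly L} := \sum_(i < k) u 0 i *: 'X^(q ^ i).

Lemma coef_linearized_poly k (u : 'rV[L]_k) (i : 'I_k) :
  (linearized_poly u)`_(q ^ i)%N = u 0 i.
Proof.
rewrite coef_sum (bigD1 i) //= coefZ coefXn eqxx mulr1 big1 ?addr0 // => l li.
have /negbTE li_nat : (i : nat) != l by rewrite eq_sym.
by rewrite coefZ coefXn eqn_exp2l ?finNzRing_gt1 // li_nat mulr0.
Qed.

Lemma linearized_poly_eq0 k (u : 'rV[L]_k) : linearized_poly u = 0 -> u = 0.
Proof. by move=> u0; apply/rowP => i; rewrite -coef_linearized_poly u0 coef0 mxE. Qed.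

Lemma size_linearized_poly k (u : 'rV[L]_k) : (size (linearized_poly u) <= (q ^ k.-1)%N.+1)%N.
Proof.
apply: leq_trans (size_sum _ _ _) _; apply/bigmax_leqP => i _.
rewrite (leq_trans (size_scale_leq _ _)) // size_polyXn ltnS leq_exp2l ?finNzRing_gt1 //.
by rewrite -ltnS prednK // (leq_ltn_trans _ (ltn_ord i)).
Qed.

Lemma horner_linearized_poly_comb k N (u : 'rV[L]_k) (g : 'rV[L]_N) (v : 'rV[F]_N) :
  (linearized_poly u).[\sum_j v 0 j *: g 0 j] = \sum_j v 0 j *: (u *m gab_gen k g) 0 j.
Proof.
rewrite horner_sum.
under eq_bigr do rewrite hornerZ hornerXn expr_card_pow_sum mulr_sumr.
rewrite exchange_big /=; apply: eq_bigr => j _.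
rewrite mxE scaler_sumr; apply: eq_bigr => i _.
by rewrite mxE scalerAr.
Qed.

Lemma gab_mulmx_eq0 k N r (g : 'rV[L]_N) (u : 'rV[L]_k) (W : 'M[F]_(N, r)) :
  free [tuple g 0 j | j < N] -> (k <= \rank W)%N ->
  u *m gab_gen k g *m map_mx (in_alg L) W = 0 -> u = 0.
Proof.
move=> free_g rankW uW0; apply/eqP; apply: contraTT rankW => u_neq0.
have k_gt0 : (0 < k)%N by case: k u {uW0} u_neq0 => [|k'] u //; rewrite [u]thinmx0 eqxx.
have P_neq0 : linearized_poly u != 0 by apply: contraNneq u_neq0 => /linearized_poly_eq0 ->.
pose comb (v : 'rV[F]_N) := \sum_j v 0 j *: g 0 j.
have comb_inj : injective comb.
  move=> v w eq_vw; apply/rowP => j; apply/eqP; rewrite -subr_eq0; apply/eqP.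
  move/freeP: free_g => /(_ (fun j => v 0 j - w 0 j)); apply.
  under eq_bigr do rewrite nth_mktuple scalerBl.
  by move: eq_vw; rewrite sumrB /comb => ->; rewrite subrr.
set c := u *m gab_gen k g.
have comb_root v : (v <= W^T)%MS -> root (linearized_poly u) (comb v).
  case/submxP=> a va; rewrite /root horner_linearized_poly_comb -/c.
  have -> : \sum_j v 0 j *: c 0 j = (c *m map_mx (in_alg L) v^T) 0 0.
    by rewrite mxE; apply: eq_bigr => j _; rewrite !mxE mulr_algr.
  by rewrite va trmx_mul trmxK map_mxM mulmxA uW0 mul0mx mxE.
have := max_rowspace_roots comb_inj P_neq0 comb_root.
rewrite mxrank_tr => /leq_trans/(_ (size_linearized_poly u)).
rewrite ltnS leq_exp2l ?finNzRing_gt1 // -ltnNge => rankW.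
by rewrite (leq_ltn_trans rankW) // ltn_predL.
Qed.

End Gabidulin.

Theorem theorem1 (F : finFieldType) (m n a b h : nat)
  (Hma : (a < m)%N) (Hnb : (b < n)%N)
  (Hh : (h <= (m - a) * (n - b) - maxn (m - a) (n - b))%N)
  (Gout : 'M[F]_((m - a) * (n - b), m * n))
  (HGrank : \rank Gout = ((m - a) * (n - b))%N)
  (HMR : MR_code a b 0 Gout)
  (L : fieldExtType F) (s : nat) (Hs : \dim {:L} = s)
  (Hsk : ((m - a) * (n - b) <= s)%N)
  (g : 'rV[L]_((m - a) * (n - b)))
  (Hg : free [tuple g 0 j | j < (m - a) * (n - b)]) :
  forall (E' I : {set 'I_m * 'I_n}),
    max_correctable a b 0 E' ->
    I \subset ~: E' -> #|I| = h ->
    corrects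
      (gab_gen ((m - a) * (n - b) - h) g *m map_mx (in_alg L) Gout)
      (E' :|: I).
Proof.
move=> E' I [corrE' _] sIE' cardI x y x_code y_code eq_xy.
have free_Gout : row_free Gout by rewrite /row_free HGrank.
set G := gab_gen _ g *m _ in x_code y_code.
have /submxP[u xy_u] : (x - y <= G)%MS by rewrite addmx_sub ?eqmx_opp.
apply/eqP; rewrite -subr_eq0 xy_u; suff -> : u = 0 by rewrite mul0mx.
apply: (gab_mulmx_eq0 (W := mask_cols (~: grid_pos (E' :|: I)) Gout) Hg).
  by rewrite -cardI; apply: mxrank_mask_cols_erasures => //; apply: HMR.2.
rewrite map_mask_cols mulmx_mask_cols -mulmxA -xy_u.
apply/rowP => p; rewrite !mxE in_setC inE.
have [[i j] ->] : exists ij, p = mxtens_index ij.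
  by exists (mxtens_unindex p); rewrite mxtens_unindexK.
rewrite mxtens_indexK; case: ifPn => // ij_out.
by rewrite (eq_xy i j ij_out) subrr.
Qed.
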